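(* Let $(\mathcal C,\otimes,I)$ be a closed monoidal category and $M$ a strong monad on $\mathcal C$. For every Eilenberg--Moore $M$-monoid of the shape $\langle MA,\mu_A,m,u\rangle$ (a Kleisli monoid), the morphism $\Lambda(m): MA\to(MA\Rightarrow MA)$ (i) is a morphism of Eilenberg--Moore $M$-monoids $\langle MA,\mu_A,m,u\rangle\to\langle MA\Rightarrow MA,\ \Lambda(p),\ \mathsf{comp},\ \mathsf{ident}\rangle$, and (ii) is a split monomorphism in $\mathcal C$, i.e. there is $r:(MA\Rightarrow MA)\to MA$ with $r\circ\Lambda(m)=\mathrm{id}_{MA}$.
   Context: Closed means each $(-)\otimes B$ has a right adjoint $B\Rightarrow(-)$; $\Lambda:\mathcal C(X\otimes B,C)\cong\mathcal C(X,B\Rightarrow C)$ is currying and $\mathsf{app}:(B\Rightarrow C)\otimes B\to C$ the counit. $\mathsf{comp}=\Lambda(\mathsf{app}\circ(\mathrm{id}\otimes\mathsf{app})\circ\cong): (MA\Rightarrow MA)\otimes(MA\Rightarrow MA)\to(MA\Rightarrow MA)$ (with $\cong$ the associator), $\mathsf{ident}=\Lambda(I\otimes MA\xrightarrow{\cong}MA)$, and $p=\mu_A\circ M\mathsf{app}\circ\tau: M(MA\Rightarrow MA)\otimes MA\to MA$, where $\tau_{X,Y}: MX\otimes Y\to M(X\otimes Y)$ is the strength of $M$. An Eilenberg--Moore $M$-monoid is $\langle E,a,m,u\rangle$ with $\langle E,a\rangle$ an Eilenberg--Moore $M$-algebra, $\langle E,m,u\rangle$ a monoid in $\mathcal C$,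 and $m\circ(a\otimes\mathrm{id}_E)=a\circ Mm\circ\tau_{E,E}$; a morphism of such is a $\mathcal C$-morphism that is both an $M$-algebra morphism and a monoid morphism. *)

Set Implicit Arguments.
Unset Strict Implicit.
Set Universe Polymorphism.

Record Category := {
  ob :> Type;
  hom : ob -> ob -> Type;
  idc : forall X, hom X X;
  comp : forall {X Y Z}, hom Y Z -> hom X Y -> hom X Z;
  comp_id_l : forall X Y (f : hom X Y), comp (idc Y) f = f;
  comp_id_r : forall X Y (f : hom X Y), comp f (idc X) = f;
  comp_assoc : forall X Y Z W (f : hom X Y) (g : hom Y Z) (h : hom Z W),
      comp h (comp g f) = comp (comp h g) f
}.
Arguments hom {c} X Y.
Arguments idc {c} X.
Arguments comp {c X Y Z} g f.
Notation "g ∘ f" := (comp g f) (at level 40, left associativity).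

Record Monoidal (c : Category) := {
  tens : c -> c -> c;
  tensor : forall {X Y X' Y'}, hom X X' -> hom Y Y' -> hom (tens X Y) (tens X' Y');
  tensor_id : forall X Y, tensor (idc X) (idc Y) = idc (tens X Y);
  tensor_comp : forall X X' X'' Y Y' Y''
      (f : hom X X') (f' : hom X' X'') (g : hom Y Y') (g' : hom Y' Y''),
      tensor (f' ∘ f) (g' ∘ g) = tensor f' g' ∘ tensor f g;
  munit : c;
  assoc : forall X Y Z, hom (tens (tens X Y) Z) (tens X (tens Y Z));
  assoc_inv : forall X Y Z, hom (tens X (tens Y Z)) (tens (tens X Y) Z);
  assoc_iso1 : forall X Y Z, assoc_inv X Y Z ∘ assoc X Y Z = idc _;
  assoc_iso2 : forall X Y Z, assoc X Y Z ∘ assoc_inv X Y Z = idc _;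
  assoc_nat : forall X X' Y Y' Z Z' (f : hom X X') (g : hom Y Y') (h : hom Z Z'),
      assoc X' Y' Z' ∘ tensor (tensor f g) h = tensor f (tensor g h) ∘ assoc X Y Z;
  lunit : forall X, hom (tens munit X) X;
  lunit_inv : forall X, hom X (tens munit X);
  lunit_iso1 : forall X, lunit_inv X ∘ lunit X = idc _;
  lunit_iso2 : forall X, lunit X ∘ lunit_inv X = idc _;
  lunit_nat : forall X X' (f : hom X X'), lunit X' ∘ tensor (idc munit) f = f ∘ lunit X;
  runit : forall X, hom (tens X munit) X;
  runit_inv : forall X, hom X (tens X munit);
  runit_iso1 : forall X, runit_inv X ∘ runit X = idc _;
  runit_iso2 : forall X, runit X ∘ runit_inv X = idc _;
  runit_nat : forall X X' (f : hom X X'), runit X' ∘ tensor f (idc munit) = f ∘ runit X;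
  pentagon : forall X Y Z W,
      assoc X Y (tens Z W) ∘ assoc (tens X Y) Z W
      = tensor (idc X) (assoc Y Z W) ∘ assoc X (tens Y Z) W ∘ tensor (assoc X Y Z) (idc W);
  triangle : forall X Y,
      tensor (idc X) (lunit Y) ∘ assoc X munit Y = tensor (runit X) (idc Y)
}.
Arguments tens {c} m X Y.
Arguments tensor {c} m {X Y X' Y'} f g.
Arguments munit {c} m.
Arguments assoc {c} m X Y Z.
Arguments lunit {c} m X.
Arguments runit {c} m X.

(** * Closed monoidal categories: each (-) ⊗ B has a right adjoint B ⇒ (-),
    presented by the counit [app] and the currying bijection [curry] (= Λ). *)
Record Closed (c : Category) (m : Monoidal c) := {
  ihom : c -> c -> c;
  app : forall B C, hom (tens m (ihom B C) B) C;
  curry : forall {X B C}, hom (tens m X B) C -> hom X (ihom B C);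
  curry_beta : forall X B C (f : hom (tens m X B) C),
      app B C ∘ tensor m (curry f) (idc B) = f;
  curry_eta : forall X B C (g : hom X (ihom B C)),
      curry (app B C ∘ tensor m g (idc B)) = g
}.
Arguments ihom {c m} _ B C.
Arguments app {c m} _ B C.
Arguments curry {c m} _ {X B C} f.

Record Monad (c : Category) := {
  M : c -> c;
  fmap : forall {X Y}, hom X Y -> hom (M X) (M Y);
  fmap_id : forall X, fmap (idc X) = idc (M X);
  fmap_comp : forall X Y Z (f : hom X Y) (g : hom Y Z), fmap (g ∘ f) = fmap g ∘ fmap f;
  eta : forall X, hom X (M X);
  mu : forall X, hom (M (M X)) (M X);
  eta_nat : forall X Y (f : hom X Y), fmap f ∘ eta X = eta Y ∘ f;
  mu_nat : forall X Y (f : hom X Y), fmap f ∘ mu X = mu Y ∘ fmap (fmap f);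
  mu_eta_l : forall X, mu X ∘ eta (M X) = idc (M X);
  mu_eta_r : forall X, mu X ∘ fmap (eta X) = idc (M X);
  mu_assoc : forall X, mu X ∘ mu (M X) = mu X ∘ fmap (mu X)
}.
Arguments M {c} _ X.
Arguments fmap {c} _ {X Y} f.
Arguments eta {c} _ X.
Arguments mu {c} _ X.

Record Strength (c : Category) (m : Monoidal c) (t : Monad c) := {
  tau : forall X Y, hom (tens m (M t X) Y) (M t (tens m X Y));
  tau_nat : forall X X' Y Y' (f : hom X X') (g : hom Y Y'),
      tau X' Y' ∘ tensor m (fmap t f) g = fmap t (tensor m f g) ∘ tau X Y;
  tau_runit : forall X, fmap t (runit m X) ∘ tau X (munit m) = runit m (M t X);
  tau_assoc : forall X Y Z,
      tau X (tens m Y Z) ∘ assoc m (M t X) Y Z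
      = fmap t (assoc m X Y Z) ∘ tau (tens m X Y) Z ∘ tensor m (tau X Y) (idc Z);
  tau_eta : forall X Y, tau X Y ∘ tensor m (eta t X) (idc Y) = eta t (tens m X Y);
  tau_mu : forall X Y,
      tau X Y ∘ tensor m (mu t X) (idc Y) = mu t (tens m X Y) ∘ fmap t (tau X Y) ∘ tau (M t X) Y
}.
Arguments tau {c m t} _ X Y.

Section EM.
Context {c : Category} {m : Monoidal c} (t : Monad c) (s : Strength m t).

Definition is_EM_algebra (E : c) (a : hom (M t E) E) : Prop :=
  a ∘ eta t E = idc E /\ a ∘ fmap t a = a ∘ mu t E.

Definition is_monoid (E : c) (mul : hom (tens m E E) E) (u : hom (munit m) E) : Prop :=
  mul ∘ tensor m mul (idc E) = mul ∘ tensor m (idc E) mul ∘ assoc m E E E /\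
  mul ∘ tensor m u (idc E) = lunit m E /\
  mul ∘ tensor m (idc E) u = runit m E.

Definition is_EM_monoid (E : c) (a : hom (M t E) E)
    (mul : hom (tens m E E) E) (u : hom (munit m) E) : Prop :=
  is_EM_algebra a /\ is_monoid mul u /\
  mul ∘ tensor m a (idc E) = a ∘ fmap t mul ∘ tau s E E.

Definition is_EM_monoid_morphism (E E' : c)
    (a : hom (M t E) E) (mul : hom (tens m E E) E) (u : hom (munit m) E)
    (a' : hom (M t E') E') (mul' : hom (tens m E' E') E') (u' : hom (munit m) E')
    (f : hom E E') : Prop :=
  f ∘ a = a' ∘ fmap t f /\
  f ∘ mul = mul' ∘ tensor m f f /\
  f ∘ u = u'.
End EM.

Section KleisliStructure.
Context {c : Category} {m : Monoidal c} (cl : Closed m) (t : Monad c) (s : Strength m t).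

Definition compE (B : c) : hom (tens m (ihom cl B B) (ihom cl B B)) (ihom cl B B) :=
  curry cl (app cl B B ∘ tensor m (idc (ihom cl B B)) (app cl B B)
            ∘ assoc m (ihom cl B B) (ihom cl B B) B).

Definition identE (B : c) : hom (munit m) (ihom cl B B) := curry cl (lunit m B).

Definition pE (A : c) : hom (tens m (M t (ihom cl (M t A) (M t A))) (M t A)) (M t A) :=
  mu t A ∘ fmap t (app cl (M t A) (M t A)) ∘ tau s (ihom cl (M t A) (M t A)) (M t A).
End KleisliStructure.

(* [Λ(m)] is the Cayley embedding of the monoid [MA] into its internal
   endomorphism monoid [MA ⇒ MA], whose multiplication [comp] is associative by
   the pentagon and unital by the triangle and Kelly's identity
   [λ ∘ α = λ ⊗ id]; [Λ(p)] is an Eilenberg–Moore algebra by the monad laws and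
   the strength axioms.  Associativity and the left unit law of [m] make [Λ(m)]
   a monoid morphism, the compatibility of [m] with [μ] makes it an algebra
   morphism, and the right unit law shows that evaluating at the unit,
   [app ∘ (id ⊗ u) ∘ ρ⁻¹], is a retraction of [Λ(m)]. *)
Set Implicit Arguments.

Lemma comp_eq_postcomp {c : Category} {X Y Z V : c}
    {a : hom Y Z} {b : hom X Y} {e : hom X Z} (k : hom Z V) :
  a ∘ b = e -> k ∘ a ∘ b = k ∘ e.
Proof. intros H. rewrite <- comp_assoc, H. reflexivity. Qed.

Lemma comp3_eq_postcomp {c : Category} {X Y Z W V : c}
    {a : hom Z W} {b : hom Y Z} {d : hom X Y} {e : hom X W} (k : hom W V) :
  a ∘ b ∘ d = e -> k ∘ a ∘ b ∘ d = k ∘ e.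
Proof. intros H. rewrite <- H, !comp_assoc. reflexivity. Qed.

Lemma split_epi_cancel {c : Category} {X Y Z : c} (q : hom X Y) (qi : hom Y X)
    (f g : hom Y Z) :
  q ∘ qi = idc Y -> f ∘ q = g ∘ q -> f = g.
Proof.
  intros Hq H. rewrite <- (comp_id_r f), <- (comp_id_r g), <- Hq, !comp_assoc, H.
  reflexivity.
Qed.

Ltac assoc_left := repeat rewrite comp_assoc.

Section MonoidalFacts.
Variables (c : Category) (mo : Monoidal c).
Local Notation "f ⊗ g" := (tensor mo f g) (at level 35).
Local Notation I := (munit mo).

Lemma tensor_comp_l {X Y Z W} (f : hom Y Z) (g : hom X Y) :
  (f ∘ g) ⊗ idc W = (f ⊗ idc W) ∘ (g ⊗ idc W).
Proof. rewrite <- tensor_comp, comp_id_l. reflexivity. Qed.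

Lemma tensor_comp_r {X Y Z W} (f : hom Y Z) (g : hom X Y) :
  idc W ⊗ (f ∘ g) = (idc W ⊗ f) ∘ (idc W ⊗ g).
Proof. rewrite <- tensor_comp, comp_id_l. reflexivity. Qed.

Lemma tensor_split_rl {X Y X' Y'} (f : hom X X') (g : hom Y Y') :
  (f ⊗ idc Y') ∘ (idc X ⊗ g) = f ⊗ g.
Proof. rewrite <- tensor_comp, comp_id_l, comp_id_r. reflexivity. Qed.

Lemma tensor_split_lr {X Y X' Y'} (f : hom X X') (g : hom Y Y') :
  (idc X' ⊗ g) ∘ (f ⊗ idc Y) = f ⊗ g.
Proof. rewrite <- tensor_comp, comp_id_l, comp_id_r. reflexivity. Qed.

Lemma runit_inv_nat {X Y} (f : hom X Y) :
  runit_inv mo Y ∘ f = (f ⊗ idc I) ∘ runit_inv mo X.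
Proof.
  rewrite <- (comp_id_r (runit_inv mo Y ∘ f)), <- (runit_iso2 mo X).
  rewrite !comp_assoc, <- (comp_assoc (runit mo X)), <- runit_nat.
  rewrite !comp_assoc, runit_iso1, comp_id_l. reflexivity.
Qed.

Lemma tensor_unit_inj {X Y} (f g : hom X Y) : idc I ⊗ f = idc I ⊗ g -> f = g.
Proof.
  intros H.
  rewrite <- (comp_id_r f), <- (comp_id_r g), <- (lunit_iso2 mo X).
  rewrite !comp_assoc, <- !lunit_nat, H. reflexivity.
Qed.

(* Kelly's identity: after tensoring with [I] on the left, both sides become
   equal by the pentagon for [I, I, X, Y] and two instances of the triangle. *)
Lemma lunit_assoc X Y : lunit mo (tens mo X Y) ∘ assoc mo I X Y = lunit mo X ⊗ idc Y.
Proof.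
  apply tensor_unit_inj.
  set (q := assoc mo I (tens mo I X) Y ∘ assoc mo I I X ⊗ idc Y).
  assert (Hq : (idc I ⊗ lunit mo (tens mo X Y)) ∘ (idc I ⊗ assoc mo I X Y) ∘ q
             = (idc I ⊗ (lunit mo X ⊗ idc Y)) ∘ q).
  { assert (Htriangles : (idc I ⊗ lunit mo (tens mo X Y)) ∘ assoc mo I I (tens mo X Y)
                   ∘ assoc mo (tens mo I I) X Y
                 = (idc I ⊗ (lunit mo X ⊗ idc Y)) ∘ assoc mo I (tens mo I X) Y
                   ∘ (assoc mo I I X ⊗ idc Y)).
    { rewrite triangle, <- tensor_id, <- assoc_nat.
      rewrite <- triangle, tensor_comp_l, comp_assoc, assoc_nat. reflexivity. }
    rewrite <- comp_assoc, pentagon in Htriangles.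
    unfold q. assoc_left. rewrite <- Htriangles. assoc_left. reflexivity. }
  set (qi := assoc_inv mo I I X ⊗ idc Y ∘ assoc_inv mo I (tens mo I X) Y).
  assert (Hqi : q ∘ qi = idc _).
  { unfold q, qi. rewrite !comp_assoc, <- (comp_assoc (assoc_inv mo I I X ⊗ idc Y)).
    rewrite <- tensor_comp_l, assoc_iso2, tensor_id, comp_id_r, assoc_iso2.
    reflexivity. }
  rewrite tensor_comp_r. exact (split_epi_cancel _ _ _ _ Hqi Hq).
Qed.
End MonoidalFacts.

Section ClosedFacts.
Variables (c : Category) (mo : Monoidal c) (cl : Closed mo).
Local Notation "f ⊗ g" := (tensor mo f g) (at level 35).

Lemma curry_comp {X X' B C} (f : hom (tens mo X B) C) (g : hom X' X) :
  curry cl f ∘ g = curry cl (f ∘ (g ⊗ idc B)).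
Proof.
  rewrite <- (curry_eta (curry cl f ∘ g)).
  f_equal. rewrite tensor_comp_l, comp_assoc, curry_beta. reflexivity.
Qed.

Lemma ihom_ext {X B C} (f g : hom X (ihom cl B C)) :
  app cl B C ∘ (f ⊗ idc B) = app cl B C ∘ (g ⊗ idc B) -> f = g.
Proof. intros H. rewrite <- (curry_eta f), <- (curry_eta g), H. reflexivity. Qed.

Lemma curry_app B C : curry cl (app cl B C) = idc _.
Proof. rewrite <- (comp_id_r (app cl B C)), <- tensor_id, curry_eta. reflexivity. Qed.

Lemma app_compE {X Y B} (f : hom X (ihom cl B B)) (g : hom Y (ihom cl B B)) :
  app cl B B ∘ ((compE cl B ∘ (f ⊗ g)) ⊗ idc B)
  = app cl B B ∘ (f ⊗ (app cl B B ∘ (g ⊗ idc B))) ∘ assoc mo X Y B.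
Proof.
  unfold compE. rewrite tensor_comp_l, comp_assoc, curry_beta.
  rewrite <- comp_assoc, assoc_nat, comp_assoc.
  f_equal. rewrite <- comp_assoc, <- tensor_comp, comp_id_l. reflexivity.
Qed.
End ClosedFacts.

Section InternalEndomorphisms.
Variables (c : Category) (mo : Monoidal c) (cl : Closed mo) (B : c).
Local Notation "f ⊗ g" := (tensor mo f g) (at level 35).
Local Notation E := (ihom cl B B).
Local Notation ev := (app cl B B).

Lemma app_compE_id : ev ∘ (compE cl B ⊗ idc B) = ev ∘ (idc E ⊗ ev) ∘ assoc mo E E B.
Proof. apply curry_beta. Qed.

Lemma compE_assoc :
  compE cl B ∘ (compE cl B ⊗ idc E)
  = compE cl B ∘ (idc E ⊗ compE cl B) ∘ assoc mo E E E.
Proof.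
  apply ihom_ext.
  rewrite app_compE, tensor_comp_l, comp_assoc, app_compE, app_compE_id.
  rewrite tensor_id, comp_id_r, <- tensor_split_rl, comp_assoc, app_compE_id.
  rewrite !tensor_comp_r. assoc_left.
  rewrite <- (tensor_id mo E E), (comp_eq_postcomp _ (assoc_nat mo _ _ _)).
  rewrite (comp3_eq_postcomp _ (eq_sym (pentagon _ _ _ _ _))).
  assoc_left. reflexivity.
Qed.

Lemma compE_identE_l : compE cl B ∘ (identE cl B ⊗ idc E) = lunit mo E.
Proof.
  apply ihom_ext.
  rewrite app_compE, tensor_id, comp_id_r, <- tensor_split_rl, comp_assoc.
  unfold identE. rewrite curry_beta, lunit_nat, <- comp_assoc, lunit_assoc.
  reflexivity.
Qed.

Lemma compE_identE_r : compE cl B ∘ (idc E ⊗ identE cl B) = runit mo E.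
Proof.
  apply ihom_ext.
  unfold identE. rewrite app_compE, curry_beta, <- comp_assoc, triangle.
  reflexivity.
Qed.

Lemma compE_identE_monoid : is_monoid (compE cl B) (identE cl B).
Proof.
  split; [exact compE_assoc | split; [exact compE_identE_l | exact compE_identE_r]].
Qed.
End InternalEndomorphisms.

Section KleisliEndomorphisms.
Variables (c : Category) (mo : Monoidal c) (cl : Closed mo) (t : Monad c)
  (s : Strength mo t) (A : c).
Local Notation "f ⊗ g" := (tensor mo f g) (at level 35).
Local Notation B := (M t A).
Local Notation E := (ihom cl B B).
Local Notation ev := (app cl B B).
Local Notation p := (pE cl s A).

Lemma tau_nat_r {X Y Y'} (g : hom Y Y') :
  tau s X Y' ∘ (idc (M t X) ⊗ g) = fmap t (idc X ⊗ g) ∘ tau s X Y.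
Proof. rewrite <- fmap_id, tau_nat. reflexivity. Qed.

Lemma app_curry_pE_fmap {X} (g : hom X E) :
  ev ∘ ((curry cl p ∘ fmap t g) ⊗ idc B) = mu t A ∘ fmap t (ev ∘ (g ⊗ idc B)) ∘ tau s X B.
Proof.
  rewrite tensor_comp_l, comp_assoc, curry_beta. unfold pE.
  rewrite <- comp_assoc, tau_nat, fmap_comp. assoc_left. reflexivity.
Qed.

Lemma curry_pE_unit : curry cl p ∘ eta t E = idc E.
Proof.
  rewrite curry_comp. unfold pE.
  rewrite <- comp_assoc, tau_eta, <- comp_assoc, eta_nat, comp_assoc, mu_eta_l, comp_id_l.
  apply curry_app.
Qed.

Lemma curry_pE_mult : curry cl p ∘ fmap t (curry cl p) = curry cl p ∘ mu t E.
Proof.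
  apply ihom_ext.
  rewrite app_curry_pE_fmap, tensor_comp_l, comp_assoc, !curry_beta. unfold pE.
  rewrite (comp_eq_postcomp _ (tau_mu s _ _)), !fmap_comp. assoc_left.
  rewrite <- mu_assoc, (comp_eq_postcomp _ (mu_nat _ _)).
  assoc_left. reflexivity.
Qed.

Lemma curry_pE_EM_algebra : is_EM_algebra (curry cl p).
Proof. split; [exact curry_pE_unit | exact curry_pE_mult]. Qed.

Lemma compE_curry_pE :
  compE cl B ∘ (curry cl p ⊗ idc E) = curry cl p ∘ fmap t (compE cl B) ∘ tau s E E.
Proof.
  apply ihom_ext.
  rewrite app_compE, tensor_comp_l, comp_assoc, app_curry_pE_fmap, app_compE_id.
  rewrite tensor_id, comp_id_r, <- tensor_split_rl, comp_assoc, curry_beta. unfold pE.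
  rewrite (comp_eq_postcomp _ (tau_nat_r _)). assoc_left.
  rewrite (comp_eq_postcomp _ (tau_assoc s _ _ _)), !fmap_comp.
  assoc_left. reflexivity.
Qed.

Lemma curry_pE_EM_monoid : is_EM_monoid s (curry cl p) (compE cl B) (identE cl B).
Proof.
  split; [exact curry_pE_EM_algebra | split; [apply compE_identE_monoid | exact compE_curry_pE]].
Qed.

Lemma curry_mul_algebra_morphism (mul : hom (tens mo B B) B) :
  mul ∘ (mu t A ⊗ idc B) = mu t A ∘ fmap t mul ∘ tau s B B ->
  curry cl mul ∘ mu t A = curry cl p ∘ fmap t (curry cl mul).
Proof.
  intros Hcompat. apply ihom_ext.
  rewrite app_curry_pE_fmap, tensor_comp_l, comp_assoc, !curry_beta. exact Hcompat.
Qed.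
End KleisliEndomorphisms.

Section CayleyEmbedding.
Variables (c : Category) (mo : Monoidal c) (cl : Closed mo) (X : c)
  (mul : hom (tens mo X X) X) (u : hom (munit mo) X).
Local Notation "f ⊗ g" := (tensor mo f g) (at level 35).

Lemma curry_mul_mul :
  mul ∘ (mul ⊗ idc X) = mul ∘ (idc X ⊗ mul) ∘ assoc mo X X X ->
  curry cl mul ∘ mul = compE cl X ∘ (curry cl mul ⊗ curry cl mul).
Proof.
  intros Hassoc. apply ihom_ext.
  rewrite app_compE, tensor_comp_l, comp_assoc, !curry_beta, Hassoc.
  rewrite <- (tensor_split_rl mo (curry cl mul) mul), comp_assoc, curry_beta.
  reflexivity.
Qed.

Lemma curry_mul_unit :
  mul ∘ (u ⊗ idc X) = lunit mo X -> curry cl mul ∘ u = identE cl X.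
Proof. intros Hunit. rewrite curry_comp, Hunit. reflexivity. Qed.

Lemma curry_mul_retraction :
  mul ∘ (idc X ⊗ u) = runit mo X ->
  app cl X X ∘ (idc (ihom cl X X) ⊗ u) ∘ runit_inv mo (ihom cl X X) ∘ curry cl mul
  = idc X.
Proof.
  intros Hunit.
  rewrite <- comp_assoc, runit_inv_nat. assoc_left.
  rewrite (comp_eq_postcomp _ (tensor_split_lr mo _ _)), <- tensor_split_rl.
  assoc_left. rewrite curry_beta, Hunit, runit_iso2. reflexivity.
Qed.
End CayleyEmbedding.

Theorem theorem16 (c : Category) (mo : Monoidal c) (cl : Closed mo) (t : Monad c)
    (s : Strength mo t) (A : c)
    (mul : hom (tens mo (M t A) (M t A)) (M t A)) (u : hom (munit mo) (M t A)) :
  is_EM_monoid s (mu t A) mul u ->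
  (is_EM_monoid s (curry cl (pE cl s A)) (compE cl (M t A)) (identE cl (M t A)) /\
   is_EM_monoid_morphism (mu t A) mul u
     (curry cl (pE cl s A)) (compE cl (M t A)) (identE cl (M t A))
     (curry cl mul)) /\
  exists r : hom (ihom cl (M t A) (M t A)) (M t A), r ∘ curry cl mul = idc (M t A).
Proof.
  intros [_ [[Hassoc [Hlunit Hrunit]] Hcompat]].
  split; [split|].
  - apply curry_pE_EM_monoid.
  - split; [|split].
    + apply curry_mul_algebra_morphism, Hcompat.
    + apply curry_mul_mul, Hassoc.
    + apply curry_mul_unit, Hlunit.
  - eexists. apply curry_mul_retraction, Hrunit.
Qed.
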